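(* Let $F$ be a subfield of $\mathbb{R}$ and let $\sigma\subseteq\mathbb{R}^n$ be a $k$-dimensional $F$-simplex with one vertex $v_0$ at the origin. Then there is an orthogonal basis $U$ of $\mathbb{R}^n$ such that the squared length of each vector in $U$ lies in $F$ and all coordinates of all vertices of $\sigma$ with respect to $U$ lie in $F$.
   Context: A Euclidean simplex is an $F$-simplex if the square of the length of each of its edges ($1$-cells) lies in $F$. *)

From HB Require Import structures.
From mathcomp Require Import all_boot all_order all_algebra.
From mathcomp Require Import reals.
Set Implicit Arguments. Unset Strict Implicit. Unset Printing Implicit Defensive.
Import Order.TTheory GRing.Theory Num.Theory.
Local Open Scope ring_scope.

Definition dotv (R : realType) (n : nat) (u v : 'rV[R]_n) : R :=
  \sum_(i < n) u 0 i * v 0 i.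

Definition sqlen (R : realType) (n : nat) (u : 'rV[R]_n) : R := dotv u u.

Definition is_subfield (R : realType) (F : {pred R}) : Prop :=
  [/\ 0 \in F, 1 \in F,
      (forall x y, x \in F -> y \in F -> x - y \in F),
      (forall x y, x \in F -> y \in F -> x * y \in F) &
      (forall x, x \in F -> x != 0 -> x^-1 \in F)].

Definition affinely_independent (R : realType) (n k : nat)
    (v : 'I_k.+1 -> 'rV[R]_n) : Prop :=
  forall c : 'I_k.+1 -> R,
    \sum_(i < k.+1) c i = 0 -> \sum_(i < k.+1) c i *: v i = 0 ->
    forall i, c i = 0.

Definition F_simplex (R : realType) (F : {pred R}) (n k : nat)
    (v : 'I_k.+1 -> 'rV[R]_n) : Prop :=
  affinely_independent v /\ forall i j, sqlen (v i - v j) \in F.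

(* U : 'I_n -> R^n is an orthogonal basis of R^n: nonzero pairwise
   orthogonal vectors, n of them (hence a basis). *)
Definition orthogonal_basis (R : realType) (n : nat) (U : 'I_n -> 'rV[R]_n)
  : Prop :=
  (forall j, U j != 0) /\ (forall j l, j != l -> dotv (U j) (U l) = 0).

From HB Require Import structures.
From mathcomp Require Import all_boot all_order all_algebra.
From mathcomp Require Import reals ring.
Import Order.TTheory GRing.Theory Num.Theory.
Local Open Scope ring_scope.
Set Implicit Arguments.
Unset Strict Implicit.
Unset Printing Implicit Defensive.

(* Run Gram-Schmidt, without normalising, on v_1, ..., v_k followed by the
   standard basis e_1, ..., e_n.  Since v_0 = 0, every |v_i|^2 is an edge
   length, so by polarisation all inner products v_i . v_j lie in F.  The
   Gram-Schmidt coefficients are quotients of such inner products, hence the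
   first k output vectors have squared lengths in F and each v_i is an
   F-combination of them; the remaining output vectors are normalised to
   squared length 1.  After discarding zero vectors we are left with an
   orthogonal family spanning R^n, hence with exactly n vectors. *)

Section InnerProduct.
Variables (R : realType) (n : nat).
Implicit Types (a : R) (x y : 'rV[R]_n).

Lemma dotvC x y : dotv x y = dotv y x.
Proof. by apply: eq_bigr => i _; rewrite mulrC. Qed.

Fact dotv_is_semiscalar x : semiscalar (dotv x).
Proof.
split=> [a y | y y']; rewrite /dotv ?mulr_sumr -?big_split;
  by apply: eq_bigr => i _; rewrite !mxE (mulrCA, mulrDr).
Qed.

HB.instance Definition _ x :=
  GRing.isSemilinear.Build R 'rV[R]_n R *%R (dotv x) (dotv_is_semiscalar x).

Lemma sqlen_ge0 x : 0 <= sqlen x.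
Proof. by rewrite sumr_ge0 // => i _; rewrite -expr2 sqr_ge0. Qed.

Lemma sqlen_eq0 x : (sqlen x == 0) = (x == 0).
Proof.
apply/idP/eqP => [|->]; last by rewrite /sqlen linear0.
rewrite psumr_eq0 => [/allP x0 | i _]; last by rewrite -expr2 sqr_ge0.
apply/rowP => i; rewrite mxE; apply/eqP; rewrite -sqrf_eq0 expr2.
exact: x0 i (mem_index_enum i).
Qed.

Lemma sqlen_gt0 x : (0 < sqlen x) = (x != 0).
Proof. by rewrite lt_def sqlen_eq0 sqlen_ge0 andbT. Qed.

Lemma sqlenZ a x : sqlen (a *: x) = a ^+ 2 * sqlen x.
Proof. by rewrite /sqlen linearZ /= [dotv (a *: x) _]dotvC linearZ /= mulrA. Qed.

Lemma dotv_polar x y : dotv x y = (sqlen x + sqlen y - sqlen (x - y)) / 2.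
Proof.
rewrite /sqlen !linearB /= [dotv (x - y) _]dotvC [dotv (x - y) y]dotvC !linearB /=.
by rewrite (dotvC y x); field.
Qed.

Definition normalize x := (Num.sqrt (sqlen x))^-1 *: x.

Lemma normalizeK x : Num.sqrt (sqlen x) *: normalize x = x.
Proof.
have [-> | x_neq0] := eqVneq x 0; first by rewrite /normalize !scaler0.
by rewrite scalerA divff ?scale1r // sqrtr_eq0 -ltNge sqlen_gt0.
Qed.

Lemma sqlen_normalize x : sqlen (normalize x) = (x != 0)%:R.
Proof.
have [-> | x_neq0] := eqVneq x 0; first by rewrite /normalize scaler0 /sqlen linear0.
by rewrite sqlenZ exprVn sqr_sqrtr ?sqlen_ge0 // mulVf // sqlen_eq0.
Qed.

Lemma row_free_orthogonal p (M : 'M[R]_(p, n)) :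
  (forall i, row i M != 0) ->
  (forall i j, i != j -> dotv (row i M) (row j M) = 0) -> row_free M.
Proof.
move=> M_neq0 M_orth.
have MMt : M *m M^T = diag_mx (\row_i sqlen (row i M)).
  apply/matrixP => i j; rewrite !mxE.
  have -> : \sum_l M i l * M^T l j = dotv (row i M) (row j M).
    by apply: eq_bigr => l _; rewrite !mxE.
  by have [-> | /M_orth ->] := eqVneq i j; rewrite ?mulr1n ?mulr0n.
have : M *m M^T \in unitmx.
  rewrite MMt unitmxE det_diag unitfE; apply/prodf_neq0 => i _.
  by rewrite mxE sqlen_eq0.
rewrite /row_free eqn_leq rank_leq_row => /mxrank_unit {1}<-.
exact: mxrankM_maxl.
Qed.

Lemma orthogonal_spanning_basis m (w : 'I_m -> 'rV[R]_n) :
  (forall l l', l != l' -> dotv (w l) (w l') = 0) ->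
  (forall j : 'I_n, exists c : 'I_m -> R, delta_mx 0 j = \sum_l c l *: w l) ->
  exists e : 'I_n -> 'I_m, [/\ injective e, forall j, w (e j) != 0 &
    forall c : 'I_m -> R, \sum_l c l *: w l = \sum_j c (e j) *: w (e j)].
Proof.
move=> w_orth w_span; pose S := [set l | w l != 0].
have sum_S c : \sum_l c l *: w l = \sum_(i < #|S|) c (enum_val i) *: w (enum_val i).
  rewrite -(big_enum_val (fun l => c l *: w l)) [RHS]big_mkcond; apply: eq_bigr => l _.
  by rewrite inE; case: eqP => // ->; rewrite scaler0.
pose M := \matrix_(i < #|S|) w (enum_val i).
have rowM i : row i M = w (enum_val i) by rewrite rowK.
have S_le_n : (#|S| <= n)%N.
  suff /eqP <- : row_free M by apply: rank_leq_col.
  apply: row_free_orthogonal => [i | i j ij]; rewrite !rowM.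
    by have := enum_valP i; rewrite inE.
  by apply: w_orth; apply: contra ij => /eqP /enum_val_inj ->.
have n_le_S : (n <= #|S|)%N.
  suff sub1M : (1%:M <= M)%MS.
    by rewrite -[X in (X <= _)%N](mxrank1 R) (leq_trans (mxrankS sub1M)) ?rank_leq_row.
  apply/row_subP => j; rewrite row1; have [c ->] := w_span j; rewrite sum_S.
  by apply: summx_sub => i _; apply: scalemx_sub; rewrite -rowM row_sub.
have card_S : #|S| = n by apply/eqP; rewrite eqn_leq S_le_n n_le_S.
exists (fun j => enum_val (cast_ord (esym card_S) j)); split.
- by move=> i j /enum_val_inj /cast_ord_inj.
- by move=> j; have := enum_valP (cast_ord (esym card_S) j); rewrite inE.
move=> c; rewrite sum_S (reindex (cast_ord card_S)) /=.
  by apply: eq_bigr => i _; rewrite cast_ordK.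
exact: onW_bij (Bijective (cast_ordK _) (cast_ordKV _)).
Qed.

End InnerProduct.

Section GramSchmidt.
Variables (R : realType) (n : nat) (z : nat -> 'rV[R]_n).

Fixpoint gram_schmidt m : seq 'rV[R]_n :=
  if m is m'.+1 then
    rcons (gram_schmidt m')
      (z m' - \sum_(u <- gram_schmidt m') (dotv (z m') u / sqlen u) *: u)
  else [::].

Definition gsv m := nth 0 (gram_schmidt m.+1) m.

Definition gs_coef m l := dotv (z m) (gsv l) / sqlen (gsv l).

Lemma size_gram_schmidt m : size (gram_schmidt m) = m.
Proof. by elim: m => //= m IHm; rewrite size_rcons IHm. Qed.

Lemma gsv_rcons m :
  gsv m = z m - \sum_(u <- gram_schmidt m) (dotv (z m) u / sqlen u) *: u.
Proof. by rewrite /gsv /= nth_rcons size_gram_schmidt ltnn eqxx. Qed.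

Lemma gram_schmidtE m : gram_schmidt m = [seq gsv l | l <- iota 0 m].
Proof.
elim: m => // m IHm.
have -> : iota 0 m.+1 = rcons (iota 0 m) m by rewrite -cats1 -(iotaD 0 m 1) addn1.
by rewrite map_rcons -IHm /= -gsv_rcons.
Qed.

Lemma gsvE m : gsv m = z m - \sum_(l < m) gs_coef m l *: gsv l.
Proof.
have iotaE : iota 0 m = index_iota 0 m by rewrite /index_iota subn0.
by rewrite gsv_rcons gram_schmidtE big_map iotaE big_mkord.
Qed.

Lemma gsv_orth l m : l != m -> dotv (gsv l) (gsv m) = 0.
Proof.
suff orth_lt p q : (q < p)%N -> dotv (gsv q) (gsv p) = 0.
  by case: (ltngtP l m) => [/orth_lt | /orth_lt | ->]; rewrite ?eqxx // dotvC.
elim/ltn_ind: p q => p IHp q lt_qp.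
have [-> | gsv_q_neq0] := eqVneq (gsv q) 0; first by rewrite dotvC linear0.
rewrite [gsv p]gsvE linearB linear_sum (bigD1 (Ordinal lt_qp)) //= big1 => [|j neq_jq].
  by rewrite addr0 linearZ /= /gs_coef dotvC divfK ?subrr // sqlen_eq0.
have neq_jq' : j != q :> nat by apply: contra neq_jq => /eqP eq_jq; apply/eqP/val_inj.
rewrite linearZ /=; case: (ltngtP j q) neq_jq' => [lt_jq | lt_qj | ->] //= _.
  by rewrite dotvC IHp ?mulr0.
by rewrite IHp ?mulr0.
Qed.

Lemma sqlen_gsv m : sqlen (gsv m) = dotv (z m) (gsv m).
Proof.
rewrite /sqlen [X in dotv X _]gsvE dotvC linearB linear_sum big1 ?subr0 1?dotvC // => j _.
by rewrite linearZ /= gsv_orth ?mulr0 // gtn_eqF.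
Qed.

Definition gs_coord m l := if (l < m)%N then gs_coef m l else (l == m)%:R.

Lemma gs_decomp N m : (m < N)%N -> z m = \sum_(l < N) gs_coord m l *: gsv l.
Proof.
move=> lt_mN; rewrite -(subnKC lt_mN) big_split_ord /= [X in _ + X]big1 => [|l _].
  rewrite addr0 big_ord_recr /= /gs_coord ltnn eqxx scale1r [gsv m]gsvE.
  by under eq_bigr do rewrite ltn_ord; rewrite addrC subrK.
by rewrite /gs_coord /= ltnNge leqW ?leq_addr //= gtn_eqF ?leq_addr // scale0r.
Qed.

End GramSchmidt.

Section SimplexFrame.
Variables (R : realType) (n k : nat) (v : 'I_k.+1 -> 'rV[R]_n).

Definition simplex_seq m : 'rV[R]_n :=
  if (m < k)%N then v (inord m.+1) else \row_(j < n) (j == (m - k)%N :> nat)%:R.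

Definition simplex_frame (l : 'I_(k + n)) :=
  if (l < k)%N then gsv simplex_seq l else normalize (gsv simplex_seq l).

Lemma simplex_frameE (l : 'I_(k + n)) : simplex_frame l =
  (if (l < k)%N then 1 else (Num.sqrt (sqlen (gsv simplex_seq l)))^-1)
    *: gsv simplex_seq l.
Proof. by rewrite /simplex_frame; case: ifP; rewrite ?scale1r. Qed.

Lemma gsv_simplex_frame (l : 'I_(k + n)) : gsv simplex_seq l =
  (if (l < k)%N then 1 else Num.sqrt (sqlen (gsv simplex_seq l))) *: simplex_frame l.
Proof. by rewrite /simplex_frame; case: ifP; rewrite ?scale1r ?normalizeK. Qed.

Lemma simplex_frame_orth (l l' : 'I_(k + n)) :
  l != l' -> dotv (simplex_frame l) (simplex_frame l') = 0.
Proof.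
move=> neq_ll'; rewrite !simplex_frameE linearZ /= dotvC linearZ /=.
by rewrite gsv_orth ?mulr0 // eq_sym.
Qed.

Lemma simplex_frame_span (j : 'I_n) :
  exists c, delta_mx 0 j = \sum_(l < k + n) c l *: simplex_frame l.
Proof.
have -> : delta_mx 0 j = simplex_seq (k + j).
  by apply/rowP => i; rewrite /simplex_seq ltnNge leq_addr /= addKn !mxE.
have lt_kj : (k + j < k + n)%N by rewrite ltn_add2l.
rewrite (gs_decomp _ lt_kj).
exists (fun l => gs_coord simplex_seq (k + j) l *
  (if (l < k)%N then 1 else Num.sqrt (sqlen (gsv simplex_seq l)))).
by apply: eq_bigr => l _; rewrite -scalerA -gsv_simplex_frame.
Qed.

End SimplexFrame.

Section SubfieldCoordinates.
Variables (R : realType) (F : {pred R}).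
Hypothesis F_subfield : is_subfield F.

Fact subfield_divring_closed : GRing.divring_closed F.
Proof.
have [F0 F1 FB FM FV] := F_subfield; split=> // x y Fx Fy.
have [-> | y_neq0] := eqVneq y 0; first by rewrite invr0 mulr0.
by rewrite FM ?FV.
Qed.

HB.instance Definition _ :=
  GRing.isDivringClosed.Build R F subfield_divring_closed.

Lemma dotv_subfield n (x y : 'rV[R]_n) :
  sqlen x \in F -> sqlen y \in F -> sqlen (x - y) \in F -> dotv x y \in F.
Proof. by move=> *; rewrite dotv_polar rpredM ?rpredV ?rpred_nat ?rpredB ?rpredD. Qed.

Section GramSchmidtSubfield.
Variables (n K : nat) (z : nat -> 'rV[R]_n).
Hypothesis z_dotv : forall i j, (i < K)%N -> (j < K)%N -> dotv (z i) (z j) \in F.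

Lemma dotv_gsv_subfield m i : (m < K)%N -> (i < K)%N -> dotv (z i) (gsv z m) \in F.
Proof.
elim/ltn_ind: m i => m IHm i lt_mK lt_iK.
have lt_K l : (l < m)%N -> (l < K)%N := fun lt_lm => ltn_trans lt_lm lt_mK.
rewrite gsvE linearB linear_sum rpredB ?z_dotv //= rpred_sum // => l _.
have dotv_l a : (a < K)%N -> dotv (z a) (gsv z l) \in F by apply/IHm/lt_K.
rewrite linearZ /= rpredM ?dotv_l //.
by rewrite /gs_coef rpredM ?rpredV ?sqlen_gsv ?dotv_l // lt_K.
Qed.

Lemma gs_coord_subfield m l : (m < K)%N -> gs_coord z m l \in F.
Proof.
move=> lt_mK; rewrite /gs_coord; case: ifP => [lt_lm | _]; last exact: rpred_nat.
have lt_lK := ltn_trans lt_lm lt_mK.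
by rewrite rpredM ?rpredV ?sqlen_gsv ?dotv_gsv_subfield.
Qed.

End GramSchmidtSubfield.

Variables (n k : nat) (v : 'I_k.+1 -> 'rV[R]_n).
Hypotheses (edge_sqlen : forall i j, sqlen (v i - v j) \in F) (v0 : v ord0 = 0).

Lemma simplex_seq_dotv i j :
  (i < k)%N -> (j < k)%N -> dotv (simplex_seq v i) (simplex_seq v j) \in F.
Proof.
have sqlen_v a : sqlen (v a) \in F by rewrite -[v a]subr0 -v0 edge_sqlen.
by move=> lt_ik lt_jk; rewrite /simplex_seq lt_ik lt_jk dotv_subfield.
Qed.

Lemma sqlen_simplex_frame (l : 'I_(k + n)) : sqlen (simplex_frame v l) \in F.
Proof.
rewrite /simplex_frame; case: ifP => [lt_lk | _].
  by rewrite sqlen_gsv (dotv_gsv_subfield simplex_seq_dotv).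
by rewrite sqlen_normalize rpred_nat.
Qed.

Lemma simplex_vertex_coords i : exists2 d : 'I_(k + n) -> R,
  forall l, d l \in F & v i = \sum_l d l *: simplex_frame v l.
Proof.
case: (unliftP ord0 i) => [j -> | ->]; last first.
  by exists (fun=> 0) => [l|]; rewrite ?rpred0 // v0 big1 // => l _; rewrite scale0r.
exists (gs_coord (simplex_seq v) j) => [l|].
  exact: gs_coord_subfield simplex_seq_dotv _ _ (ltn_ord j).
have -> : v (lift ord0 j) = simplex_seq v j.
  rewrite /simplex_seq ltn_ord; congr v; apply/val_inj.
  by rewrite /= inordK /bump ?leq0n ?ltnS.
have lt_jkn : (j < k + n)%N by rewrite ltn_addr.
rewrite (gs_decomp _ lt_jkn); apply: eq_bigr => l _.
rewrite simplex_frameE; case: ifP => lt_lk; first by rewrite scale1r.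
have lt_jl : (j < l)%N by rewrite (leq_trans (ltn_ord j)) // leqNgt lt_lk.
by rewrite /gs_coord ltnNge ltnW //= gtn_eqF // !scale0r.
Qed.

End SubfieldCoordinates.

Unset Implicit Arguments.

Theorem lemma6p3 (R : realType) (F : {pred R}) (n k : nat)
    (v : 'I_k.+1 -> 'rV[R]_n) :
  is_subfield F -> F_simplex F v -> v ord0 = 0 ->
  exists U : 'I_n -> 'rV[R]_n,
    [/\ orthogonal_basis U,
        (forall j, sqlen (U j) \in F) &
        (forall i, exists c : 'I_n -> R,
           (forall j, c j \in F) /\ v i = \sum_(j < n) c j *: U j)].
Proof.
move=> F_subfield [_ edge_sqlen] v0.
have [e [e_inj frame_e_neq0 sum_e]] :=
  orthogonal_spanning_basis (@simplex_frame_orth R n k v) (@simplex_frame_span R n k v).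
exists (simplex_frame v \o e); split.
- split=> [j | j j' neq_jj']; first exact: frame_e_neq0.
  by apply: simplex_frame_orth; apply: contra neq_jj' => /eqP /e_inj ->.
- by move=> j; apply: sqlen_simplex_frame.
move=> i; have [d d_F ->] := simplex_vertex_coords F_subfield edge_sqlen v0 i.
by exists (d \o e); split => [j|]; [exact: d_F | exact: sum_e].
Qed.
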